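(* Let $R\subseteq\mathbb R$ be an archimedean real closed field and $\overline F$ a field with $R\subseteq\overline F\subseteq\mathbb R$. Then the map $\iota_{\overline F|R}:M(R(y))\to M(\overline F(y))$, $\zeta\mapsto\zeta_{\overline F}$, is a continuous injective map compatible with restriction. If $\overline F$ is real closed, then it is a homeomorphism onto $M(\overline F(y))$.
   Context: For a field $K$, $M(K)$ is the set of $\mathbb R$-places $K\to\mathbb R\cup\{\infty\}$, with topology generated by the subbasis $H'(b)=\{\zeta\in M(K)\mid \infty\ne\zeta(b)>0\}$, $b\in K$. Every $\zeta\in M(R(y))$ is the identity on $R$; its constant extension $\zeta_{\overline F}$ is the unique $\mathbb R$-place of $\overline F(y)$ which is the identity on $\overline F$ and satisfies $\zeta_{\overline F}(y)=\zeta(y)$. Compatible with restriction means $\zeta_{\overline F}|_{R(y)}=\zeta$. *)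

From HB Require Import structures.
From mathcomp Require Import all_boot all_order all_algebra.
From mathcomp Require Import Rstruct.
From mathcomp Require Import fraction.
Set Implicit Arguments. Unset Strict Implicit. Unset Printing Implicit Defensive.
Import Order.TTheory GRing.Theory Num.Theory.
Local Open Scope ring_scope.

Notation RR := Rdefinitions.R.

Notation "x %:F" := (@FracField.tofrac _ x) (format "x %:F").

(* R ∪ {∞} is modelled as [option RR], with [None] = ∞. *)

(* An R-place of a field K: a map K -> R ∪ {∞} which is a place, i.e.
   its finiteness domain O is a subring, the map is a ring morphism on O,
   and for a ≠ 0: ζ(a) = ∞ iff ζ(a^-1) = 0 (so O is a valuation ring and
   the kernel is its maximal ideal). *)
Definition is_Rplace (K : fieldType) (z : K -> option RR) : Prop :=
  [/\ z 0 = Some 0, z 1 = Some 1,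
      (forall a b r s, z a = Some r -> z b = Some s ->
          z (a + b) = Some (r + s) /\ z (a * b) = Some (r * s)) &
      (forall a, a != 0 -> (z a = None <-> z a^-1 = Some 0))].

Definition Mpl (K : fieldType) := {z : K -> option RR | is_Rplace z}.

Definition plv (K : fieldType) (z : Mpl K) : K -> option RR := proj1_sig z.

Definition Hsub (K : fieldType) (b : K) (z : Mpl K) : Prop :=
  exists r : RR, plv z b = Some r /\ (0 < r).

(* Open sets of the topology generated by the subbasis {H'(b) | b ∈ K}:
   every point has a basic neighbourhood (finite intersection of
   subbasic sets; the empty intersection being M(K)) inside the set. *)
Definition Mopen (K : fieldType) (U : Mpl K -> Prop) : Prop :=
  forall z, U z -> exists bs : seq K,
    (forall b, b \in bs -> Hsub b z) /\
    (forall w, (forall b, b \in bs -> Hsub b w) -> U w).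

Definition Mcontinuous (K L : fieldType) (f : Mpl K -> Mpl L) : Prop :=
  forall V : Mpl L -> Prop, Mopen V -> Mopen (fun z => V (f z)).

Definition yvar (k : idomainType) : {fraction {poly k}} := ('X)%:F.

Definition frac_map (k k' : idomainType) (f : {rmorphism k -> k'})
  (x : {fraction {poly k}}) : {fraction {poly k'}} :=
  let r := repr x in
  (map_poly f \n_r)%:F / (map_poly f \d_r)%:F.

(* The subfield F ⊆ R (via the embedding iF) is real closed: with the
   ordering induced from R it satisfies the real-closed (polynomial
   intermediate value) axiom, as in MathComp's rcfType. *)
Definition real_closed_sub (F : fieldType) (iF : {rmorphism F -> RR}) : Prop :=
  forall (p : {poly F}) (a b : F),
    (iF a <= iF b) -> ((map_poly iF p).[iF a] <= 0) ->
    (0 <= (map_poly iF p).[iF b]) ->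
    exists2 x : F, (iF a <= iF x <= iF b) & root p x.

From HB Require Import structures.
From mathcomp Require Import all_boot all_order all_algebra.
From mathcomp Require Import Rstruct.
From mathcomp Require Import fraction generic_quotient.
From mathcomp Require Import lra.
From mathcomp Require Import polyrcf.
From mathcomp Require reals.
From Stdlib Require Import ClassicalEpsilon ProofIrrelevance FunctionalExtensionality.
Set Implicit Arguments. Unset Strict Implicit. Unset Printing Implicit Defensive.
Import Order.TTheory GRing.Theory Num.Theory.
Local Open Scope ring_scope.

(* An R-place [w] of [K(y)] which is [phi : K -> RR] on constants is determined
   by [t = w y] in [RR U {oo}]: on a reduced fraction [n / d] it takes the value
   [n(t) / d(t)], or [oo] when [d(t) = 0], and [t = oo] reduces to [t = 0] by
   [y |-> 1/y]. So [w] is the pullback along [K(y) -> RR(y)] of evaluation at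
   [t]. When [K] is real closed and archimedean inside [RR], every R-place of
   [K(y)] is the inclusion on [K]: squares are bounded by integers, so constants
   stay finite; nonnegative constants are squares, so order is preserved; and
   [Q] is dense. Hence [M(R(y))], and [M(F(y))] for [F] real closed, are both
   parametrised by [t], and [iota] is the identity in [t]. For continuity, the
   preimage of [H'(b)] is a neighbourhood of [t], and neighbourhoods of [t] are
   cut out by [H'(y - a)] and [H'(a' - y)] with rational [a, a'] (by [H'] of
   [1/y +- m] near [oo]). *)

Section Fractions.
Variable P : idomainType.

Lemma frac_numden (x : {fraction P}) : x = (\n_(repr x))%:F / (\d_(repr x))%:F.
Proof.
have d0 := denom_ratioP (repr x).
apply: (@mulIf _ (\d_(repr x))%:F); first by rewrite tofrac_eq0.
rewrite divfK ?tofrac_eq0 // -{1}[x]reprK.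
unlock FracField.tofrac; rewrite -[_ * _]FracField.pi_mul.
apply/eqmodP; rewrite /= FracField.equivfE /FracField.mulf /=.
by rewrite !numden_Ratio ?oner_neq0 ?mulr1 ?mulf_neq0 ?oner_neq0 // mulrC.
Qed.

Lemma fracP (x : {fraction P}) : exists n d, d != 0 /\ x = n%:F / d%:F.
Proof.
by exists (\n_(repr x)), (\d_(repr x)); split; [exact: denom_ratioP | exact: frac_numden].
Qed.

Lemma frac_eq_cross (n d n' d' : P) : d != 0 -> d' != 0 ->
  n%:F / d%:F = n'%:F / d'%:F -> n * d' = n' * d.
Proof.
move=> d0 d'0 E; apply/eqP; rewrite -tofrac_eq !tofracM; apply/eqP.
have [dF d'F] : d%:F != 0 /\ d'%:F != 0 by rewrite !tofrac_eq0.
by rewrite -[n%:F](divfK dF) E mulrAC divfK.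
Qed.

End Fractions.

(* Both [frac_map] and the substitution [y |-> 1/y] are built this way. *)
Section FracLift.
Variables (K L : fieldType) (h : {rmorphism {poly K} -> L}).
Hypothesis h_neq0 : forall p, p != 0 -> h p != 0.

Definition frac_lift (x : {fraction {poly K}}) : L :=
  let r := repr x in h \n_r / h \d_r.

Lemma frac_lift_div n d : d != 0 -> frac_lift (n%:F / d%:F) = h n / h d.
Proof.
move=> d0; rewrite /frac_lift; set x := n%:F / d%:F.
have dr := denom_ratioP (repr x).
have /(congr1 h) := frac_eq_cross d0 dr (frac_numden x).
rewrite !rmorphM => E.
apply: (@mulIf _ (h d)); first exact: h_neq0.
apply: (@mulIf _ (h \d_(repr x))); first exact: h_neq0.
by rewrite divfK ?h_neq0 // mulrAC divfK ?h_neq0 // E mulrC.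
Qed.

Lemma frac_lift_tofrac p : frac_lift p%:F = h p.
Proof. by rewrite -[p%:F]divr1 -tofrac1 frac_lift_div ?oner_neq0 // rmorph1 divr1. Qed.

Lemma frac_lift_is_zmod : zmod_morphism frac_lift.
Proof.
move=> x x'; have [n [d [d0 ->]]] := fracP x; have [n' [d' [d'0 ->]]] := fracP x'.
have [hd hd'] := (h_neq0 d0, h_neq0 d'0).
have -> : - (n'%:F / d'%:F) = (- n')%:F / d'%:F by rewrite tofracN mulNr.
rewrite addf_div ?tofrac_eq0 // -!tofracM -tofracD !frac_lift_div ?mulf_neq0 //.
by rewrite rmorphD !rmorphM rmorphN -mulNr addf_div.
Qed.

Lemma frac_lift_is_monoid : monoid_morphism frac_lift.
Proof.
split; first by rewrite -tofrac1 frac_lift_tofrac rmorph1.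
move=> x x'; have [n [d [d0 ->]]] := fracP x; have [n' [d' [d'0 ->]]] := fracP x'.
by rewrite mulf_div -!tofracM !frac_lift_div ?mulf_neq0 // !rmorphM mulf_div.
Qed.

End FracLift.

Lemma eq_frac_rmorph (K L : fieldType) (f g : {rmorphism {fraction {poly K}} -> L}) :
  (forall c, f (c%:P)%:F = g (c%:P)%:F) -> f (yvar K) = g (yvar K) -> f =1 g.
Proof.
move=> fgC fgY.
have fgP (p : {poly K}) : f p%:F = g p%:F.
  elim/poly_ind: p => [|q c IH]; first by rewrite !rmorph0.
  by rewrite tofracD tofracM !rmorphD !rmorphM IH fgC -fgY.
move=> x; have [n [d [_ ->]]] := fracP x.
by rewrite !rmorphM !fmorphV !fgP.
Qed.

Section YInv.
Variable K : fieldType.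
Local Notation KY := {fraction {poly K}}.

Definition constF : {rmorphism K -> KY} := @FracField.tofrac _ \o polyC.

Lemma yvar_neq0 : yvar K != 0.
Proof. by rewrite tofrac_eq0 polyX_eq0. Qed.

Definition yinv_poly : {rmorphism {poly K} -> KY} :=
  horner_eval (yvar K)^-1 \o map_poly constF.

Lemma yinv_polyC c : yinv_poly c%:P = (c%:P)%:F.
Proof. by rewrite /= map_polyC /horner_eval hornerC. Qed.

Lemma yinv_polyX : yinv_poly 'X = (yvar K)^-1.
Proof. by rewrite /= map_polyX /horner_eval hornerX. Qed.

(* [p(1/y) * y^k] is the reversed polynomial of [p], whose constant term is the
   nonzero leading coefficient of [p]. *)
Lemma yinv_poly_mulX p : p != 0 ->
  exists k (r : {poly K}), r.[0] != 0 /\ yinv_poly p * yvar K ^+ k = r%:F.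
Proof.
elim/poly_ind: p => [|q c IH]; first by rewrite eqxx.
have [-> p0|q0 _] := eqVneq q 0.
  move: p0; rewrite mul0r add0r polyC_eq0 => c0.
  by exists 0%N, c%:P; rewrite hornerC expr0 mulr1 yinv_polyC.
have [k [r [r0 E]]] := IH q0.
exists k.+1, (r + c%:P * 'X ^+ k.+1); split.
  by rewrite hornerD hornerM hornerXn expr0n /= mulr0 addr0.
rewrite rmorphD rmorphM yinv_polyX yinv_polyC mulrDl exprS mulrA.
rewrite -[_ / _ * _]mulrA mulVf ?yvar_neq0 // mulr1 E.
by rewrite tofracD tofracM tofracXn -exprS.
Qed.

Lemma yinv_poly_neq0 p : p != 0 -> yinv_poly p != 0.
Proof.
move=> /yinv_poly_mulX [k [r [r0 E]]]; apply: contraNneq r0 => p0.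
by move: E; rewrite p0 mul0r => /esym/eqP; rewrite tofrac_eq0 => /eqP ->; rewrite horner0.
Qed.

Definition yinv : KY -> KY := frac_lift yinv_poly.

HB.instance Definition _ :=
  GRing.isZmodMorphism.Build _ _ yinv (frac_lift_is_zmod yinv_poly_neq0).
HB.instance Definition _ :=
  GRing.isMonoidMorphism.Build _ _ yinv (frac_lift_is_monoid yinv_poly_neq0).

Lemma yinvC c : yinv (c%:P)%:F = (c%:P)%:F.
Proof. by rewrite /yinv frac_lift_tofrac ?yinv_polyC //; exact: yinv_poly_neq0. Qed.

Lemma yinvY : yinv (yvar K) = (yvar K)^-1.
Proof. by rewrite /yinv frac_lift_tofrac ?yinv_polyX //; exact: yinv_poly_neq0. Qed.

Lemma yinvK : involutive yinv.
Proof.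
apply: (@eq_frac_rmorph _ _ (yinv \o yinv) idfun) => [c|] /=.
  by rewrite !yinvC.
(* A plain [rewrite yinvY] first tries the outer [yinv] and unfolds [repr]. *)
transitivity (yinv (yvar K)^-1); first by congr yinv; exact: yinvY.
by rewrite fmorphV /= yinvY invrK.
Qed.

End YInv.

Arguments yinv {K}.

Section FracMap.
Variables (K L : fieldType) (phi : {rmorphism K -> L}).

Definition map_tofrac : {rmorphism {poly K} -> {fraction {poly L}}} :=
  @FracField.tofrac _ \o map_poly phi.

Lemma map_tofrac_neq0 p : p != 0 -> map_tofrac p != 0.
Proof. by rewrite /= tofrac_eq0 map_poly_eq0. Qed.

(* Instances declared on [frac_map] itself take minutes to elaborate; this
   convertible copy carries them instead ([frac_mapE]). *)
Definition frac_rmap := frac_lift map_tofrac.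

HB.instance Definition _ :=
  GRing.isZmodMorphism.Build _ _ frac_rmap (frac_lift_is_zmod map_tofrac_neq0).
HB.instance Definition _ :=
  GRing.isMonoidMorphism.Build _ _ frac_rmap (frac_lift_is_monoid map_tofrac_neq0).

Lemma frac_mapE x : frac_map phi x = frac_rmap x.
Proof. by rewrite /frac_rmap /frac_lift /frac_map. Qed.

Lemma frac_rmap_tofrac p : frac_rmap p%:F = (map_poly phi p)%:F.
Proof. exact: (frac_lift_tofrac map_tofrac_neq0). Qed.

Lemma frac_rmapC c : frac_rmap (c%:P)%:F = ((phi c)%:P)%:F.
Proof. by rewrite frac_rmap_tofrac map_polyC. Qed.

Lemma frac_rmapY : frac_rmap (yvar K) = yvar L.
Proof. by rewrite frac_rmap_tofrac map_polyX. Qed.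

Lemma frac_rmap_yinv x : frac_rmap (yinv x) = yinv (frac_rmap x).
Proof.
apply: (@eq_frac_rmorph _ _ (frac_rmap \o yinv) (yinv \o frac_rmap)) => [c|] /=.
  by rewrite yinvC frac_rmapC yinvC.
by rewrite yinvY fmorphV /= frac_rmapY yinvY.
Qed.

End FracMap.

Lemma frac_rmap_id (K : fieldType) (x : {fraction {poly K}}) : frac_rmap idfun x = x.
Proof.
by apply: (@eq_frac_rmorph _ _ (frac_rmap idfun) idfun) => [c|];
  rewrite /= ?frac_rmapC ?frac_rmapY.
Qed.

Lemma frac_rmap_comp (K L M : fieldType) (phi : {rmorphism K -> L})
  (psi : {rmorphism L -> M}) (x : {fraction {poly K}}) :
  frac_rmap psi (frac_rmap phi x) = frac_rmap (psi \o phi) x.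
Proof.
apply: (@eq_frac_rmorph _ _ (frac_rmap psi \o frac_rmap phi) (frac_rmap (psi \o phi)))
  => [c|] /=; first by rewrite !(frac_rmapC phi, frac_rmapC psi, frac_rmapC (psi \o phi)).
by rewrite !(frac_rmapY phi, frac_rmapY psi, frac_rmapY (psi \o phi)).
Qed.

Section Place.
Variables (K : fieldType) (z : K -> option RR).
Hypothesis zP : is_Rplace z.

Lemma place0 : z 0 = Some 0. Proof. by case: zP. Qed.
Lemma place1 : z 1 = Some 1. Proof. by case: zP. Qed.

Lemma placeD a b r s : z a = Some r -> z b = Some s -> z (a + b) = Some (r + s).
Proof. by case: zP => _ _ zDM _ za zb; case: (zDM _ _ _ _ za zb). Qed.

Lemma placeM a b r s : z a = Some r -> z b = Some s -> z (a * b) = Some (r * s).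
Proof. by case: zP => _ _ zDM _ za zb; case: (zDM _ _ _ _ za zb). Qed.

Lemma placeV a : a != 0 -> (z a = None <-> z a^-1 = Some 0).
Proof. by case: zP => _ _ _; apply. Qed.

Lemma place_inf_neq0 a : z a = None -> a != 0.
Proof. by apply: contraPneq => ->; rewrite place0. Qed.

Lemma place_neq0 a r : z a = Some r -> r != 0 -> a != 0.
Proof. by move=> za; apply: contraNneq => a0; move: za; rewrite a0 place0 => -[->]. Qed.

Lemma placeVf a r : z a = Some r -> r != 0 -> z a^-1 = Some r^-1.
Proof.
move=> za r0; have a0 := place_neq0 za r0.
case zVa: (z a^-1) => [s|]; last first.
  have := (placeV (invr_neq0 a0)).1 zVa; rewrite invrK za => -[r00].
  by rewrite r00 eqxx in r0.
have := placeM za zVa; rewrite mulfV // place1 => -[rs].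
by rewrite -(mulKf r0 s) -rs mulr1.
Qed.

Lemma placeV_inf a : z a = None -> z a^-1 = Some 0.
Proof. by move=> za; apply/(placeV (place_inf_neq0 za)). Qed.

Lemma placeV0 a : a != 0 -> z a = Some 0 -> z a^-1 = None.
Proof. by move=> a0 za; apply/(placeV (invr_neq0 a0)); rewrite invrK. Qed.

Lemma placeN1 : z (-1) = Some (-1).
Proof.
case zN1: (z (-1)) => [s|]; last by have := placeV_inf zN1; rewrite invrN invr1 zN1.
have := placeD place1 zN1; rewrite subrr place0 => -[s0].
by congr Some; apply/eqP; rewrite -subr_eq0 opprK addrC -s0.
Qed.

Lemma placeN a r : z a = Some r -> z (- a) = Some (- r).
Proof. by move=> za; rewrite -mulN1r (placeM placeN1 za) mulN1r. Qed.

Lemma placeB a b r s : z a = Some r -> z b = Some s -> z (a - b) = Some (r - s).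
Proof. by move=> za zb; apply: placeD za (placeN zb). Qed.

Lemma place_infD a b s : z a = None -> z b = Some s -> z (a + b) = None.
Proof.
move=> za zb; case zab: (z (a + b)) => [r|] //.
by have := placeB zab zb; rewrite addrK za.
Qed.

Lemma place_nat n : z n%:R = Some n%:R.
Proof. by elim: n => [|n IH]; rewrite ?place0 // -addn1 !natrD (placeD IH place1). Qed.

Lemma place_int (m : int) : z m%:~R = Some m%:~R.
Proof.
by case: m => n; rewrite ?NegzE ?mulrNz; [apply: place_nat | apply/placeN/place_nat].
Qed.

Lemma place_rat (q : rat) : z (ratr q) = Some (ratr q).
Proof.
have d0 : ((denq q)%:~R : RR) != 0 by rewrite intr_eq0 denq_neq0.
exact: placeM (place_int _) (placeVf (place_int _) d0).
Qed.

(* [Hsub b w] unfolds to [place_pos (plv w) b]. *)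
Definition place_pos (a : K) := exists r, z a = Some r /\ 0 < r.

Lemma place_pos_itv (u a b : K) al be : z a = Some al -> z b = Some be ->
  place_pos (u - a) /\ place_pos (b - u) <->
  exists t, z u = Some t /\ al < t < be.
Proof.
move=> za zb; split.
  case=> -[r [zr r0]] [s [zs s0]].
  case zu: (z u) => [t|]; last by have := place_infD zu (placeN za); rewrite zr.
  exists t; split => //.
  move: (placeB zu za) (placeB zb zu); rewrite zr zs => -[er] [es].
  by move: r0 s0; rewrite er es !subr_gt0 => -> ->.
case=> t [zu /andP[alt tbe]]; split.
  by exists (t - al); rewrite (placeB zu za) subr_gt0.
by exists (be - t); rewrite (placeB zb zu) subr_gt0.
Qed.

Lemma place_pos_far (u m : K) mu : u != 0 -> z m = Some mu -> 0 < mu ->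
  place_pos (u^-1 - - m) /\ place_pos (m - u^-1) <->
  z u = None \/ exists t, z u = Some t /\ mu^-1 < `|t|.
Proof.
move=> u0 zm mu0; rewrite (place_pos_itv _ (placeN zm) zm); split.
  case=> s [zs ltNs]; case zu: (z u) => [t|]; [right | by left].
  exists t; split => //.
  have [t0|t0] := eqVneq t 0; first by have := placeV0 u0; rewrite zu t0 zs => /(_ erefl).
  have := placeVf zu t0; rewrite zs => -[st]; rewrite st -ltr_norml normfV in ltNs.
  by rewrite -(invrK `|t|) ltf_pV2 ?posrE ?invr_gt0 ?normr_gt0.
case=> [zu|[t [zu ltt]]].
  by exists 0; rewrite placeV_inf // oppr_lt0 mu0.
have t0 : t != 0 by apply: contraTneq ltt => ->; rewrite normr0 -leNgt ltW // invr_gt0.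
exists t^-1; rewrite (placeVf zu t0) -ltr_norml normfV -(invrK mu).
by rewrite ltf_pV2 ?posrE ?invr_gt0 ?normr_gt0.
Qed.

End Place.

Lemma place_comp (K L : fieldType) (f : {rmorphism K -> L}) (z : L -> option RR) :
  is_Rplace z -> is_Rplace (z \o f).
Proof.
move=> zP; split => /=; rewrite ?rmorph0 ?rmorph1 ?(place0 zP) ?(place1 zP) //.
  by move=> a b r s za zb; rewrite rmorphD rmorphM (placeD zP za zb) (placeM zP za zb).
by move=> a a0; rewrite fmorphV; apply: placeV => //; rewrite fmorph_eq0.
Qed.

Lemma Mpl_ext (K : fieldType) (w1 w2 : Mpl K) : plv w1 =1 plv w2 -> w1 = w2.
Proof.
case: w1 w2 => [f1 p1] [f2 p2] /= /functional_extensionality E; subst f2.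
by congr exist; apply: proof_irrelevance.
Qed.

Notation RY := {fraction {poly RR}}.

Definition eval_place (t : RR) (x : RY) : option RR :=
  match excluded_middle_informative
    (exists nd : {poly RR} * {poly RR}, nd.2.[t] != 0 /\ x = nd.1%:F / nd.2%:F) with
  | left H => let nd := proj1_sig (constructive_indefinite_description _ H) in
              Some (nd.1.[t] / nd.2.[t])
  | right _ => None
  end.

Section EvalPlace.
Variable t : RR.

Lemma poly_neq0_at (p : {poly RR}) : p.[t] != 0 -> p != 0.
Proof. by apply: contraNneq => ->; rewrite horner0. Qed.

Lemma eval_place_div n d :
  d.[t] != 0 -> eval_place t (n%:F / d%:F) = Some (n.[t] / d.[t]).
Proof.
move=> dt; rewrite /eval_place.
case: excluded_middle_informative => [H|[]]; last by exists (n, d).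
case: constructive_indefinite_description => -[n' d'] /= [d't E].
have /(congr1 (horner^~ t)) := frac_eq_cross (poly_neq0_at dt) (poly_neq0_at d't) E.
rewrite /= !hornerM => E'; congr Some.
apply: (@mulIf _ d.[t]) => //; apply: (@mulIf _ d'.[t]) => //.
by rewrite divfK // mulrAC divfK // E' mulrC.
Qed.

Lemma eval_place_tofrac p : eval_place t p%:F = Some p.[t].
Proof. by rewrite -[p%:F]divr1 -tofrac1 eval_place_div hornerC ?oner_neq0 // divr1. Qed.

Lemma eval_placeP x v : eval_place t x = Some v ->
  exists n d, [/\ d.[t] != 0, x = n%:F / d%:F & v = n.[t] / d.[t]].
Proof.
rewrite /eval_place; case: excluded_middle_informative => [H|//].
by case: constructive_indefinite_description => -[n d] /= [dt E] [<-]; exists n, d.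
Qed.

Lemma eval_placeDM a b r s : eval_place t a = Some r -> eval_place t b = Some s ->
  eval_place t (a + b) = Some (r + s) /\ eval_place t (a * b) = Some (r * s).
Proof.
move=> /eval_placeP [n [d [dt -> ->]]] /eval_placeP [n' [d' [d't -> ->]]].
have dd't : (d * d').[t] != 0 by rewrite hornerM mulf_neq0.
have [dF d'F] : d%:F != 0 /\ d'%:F != 0 by rewrite !tofrac_eq0 !poly_neq0_at.
split; last by rewrite mulf_div -!tofracM (eval_place_div _ dd't) !hornerM mulf_div.
rewrite (addf_div _ _ dF d'F) -!tofracM -tofracD (eval_place_div _ dd't).
by rewrite hornerD !hornerM (addf_div _ _ dt d't).
Qed.

(* Split off the multiplicity of [t] in numerator and denominator: at a pole
   the denominator keeps a factor [y - t] after cancelling. *)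
Lemma eval_place_pole a : a != 0 -> eval_place t a = None -> eval_place t a^-1 = Some 0.
Proof.
have [n [d [d0 ->]]] := fracP a; rewrite mulf_eq0 invr_eq0 !tofrac_eq0 negb_or.
case/andP=> n0 _ pole.
case: (multiplicity_XsubC n t) => i [n1 /implyP/(_ n0) n1t En].
case: (multiplicity_XsubC d t) => j [d1 /implyP/(_ d0) d1t Ed].
have cancelX k l (p q : {poly RR}) :
    (p * ('X - t%:P) ^+ (k + l))%:F / (q * ('X - t%:P) ^+ l)%:F
    = (p * ('X - t%:P) ^+ k)%:F / q%:F.
  rewrite exprD mulrA !tofracM invfM mulrACA mulfV ?mulr1 //.
  by rewrite tofrac_eq0 expf_neq0 ?polyXsubC_eq0.
have [le_ji|lt_ij] := leqP j i.
  move: pole; rewrite En Ed -(subnK le_ji) cancelX (eval_place_div _ d1t).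
  discriminate.
rewrite invf_div En Ed -(subnK (ltnW lt_ij)) cancelX (eval_place_div _ n1t).
by rewrite hornerM horner_exp hornerXsubC subrr expr0n subn_eq0 leqNgt lt_ij mulr0 mul0r.
Qed.

Lemma eval_place_is_place : is_Rplace (eval_place t).
Proof.
have evalC c : eval_place t (c%:P)%:F = Some c by rewrite eval_place_tofrac hornerC.
split; rewrite -?tofrac0 -?tofrac1 ?evalC //; first exact: eval_placeDM.
move=> a a0; split; first exact: eval_place_pole.
move=> aV0; case av: (eval_place t a) => [v|] //.
have := (eval_placeDM av aV0).2; rewrite mulfV // -tofrac1 evalC mulr0 => -[].
by move/eqP; rewrite oner_eq0.
Qed.

End EvalPlace.

Definition point_place (t : option RR) : RY -> option RR :=
  if t is Some t then eval_place t else eval_place 0 \o yinv.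

Lemma point_place_is_place t : is_Rplace (point_place t).
Proof.
case: t => [t|] /=; first exact: eval_place_is_place.
exact: (place_comp yinv (eval_place_is_place 0)).
Qed.

Lemma point_placeC t c : point_place t (c%:P)%:F = Some c.
Proof. by case: t => [t|] /=; rewrite ?yinvC eval_place_tofrac hornerC. Qed.

Lemma point_placeY t : point_place t (yvar RR) = t.
Proof.
case: t => [t|] /=; first by rewrite eval_place_tofrac hornerX.
rewrite yinvY; apply: (placeV0 (eval_place_is_place 0)); first exact: yvar_neq0.
by rewrite eval_place_tofrac hornerX.
Qed.

Section PullPlace.
Variables (K : fieldType) (phi : {rmorphism K -> RR}).
Local Notation KY := {fraction {poly K}}.

Definition pull_place (t : option RR) : KY -> option RR :=
  point_place t \o frac_rmap phi.

Lemma pull_place_is_place t : is_Rplace (pull_place t).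
Proof. exact: (place_comp _ (point_place_is_place t)). Qed.

Lemma pull_placeC t c : pull_place t (c%:P)%:F = Some (phi c).
Proof. by rewrite /pull_place /= frac_rmapC point_placeC. Qed.

Lemma pull_placeY t : pull_place t (yvar K) = t.
Proof. by rewrite /pull_place /= frac_rmapY point_placeY. Qed.

Definition fixes_consts (w : KY -> option RR) :=
  forall c, w (c%:P)%:F = Some (phi c).

Section FixedPlace.
Variable w : KY -> option RR.
Hypotheses (wP : is_Rplace w) (wC : fixes_consts w).

Lemma fixed_place_poly t : w (yvar K) = Some t ->
  forall p, w p%:F = Some (map_poly phi p).[t].
Proof.
move=> wY; elim/poly_ind => [|q c IH].
  by rewrite tofrac0 (place0 wP) rmorph0 horner0.
rewrite tofracD tofracM (placeD wP (placeM wP IH wY) (wC c)).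
by rewrite rmorphD rmorphM /= map_polyX map_polyC hornerMXaddC.
Qed.

Lemma fixed_place_coprime t n d : w (yvar K) = Some t -> coprimep n d -> d != 0 ->
  w (n%:F / d%:F) = if (map_poly phi d).[t] == 0 then None
                    else Some ((map_poly phi n).[t] / (map_poly phi d).[t]).
Proof.
move=> wY nd d0; have wp := fixed_place_poly wY.
case: eqP => [dt|/eqP dt]; last by rewrite (placeM wP (wp n) (placeVf wP (wp d) dt)).
have nt : (map_poly phi n).[t] != 0.
  apply: (coprimep_root (p := map_poly phi d)).
    by rewrite coprimep_map coprimep_sym.
  by rewrite /root dt.
have n0 : n != 0 by apply: contraNneq nt => ->; rewrite rmorph0 horner0.
apply/(placeV wP); first by rewrite mulf_neq0 ?invr_eq0 ?tofrac_eq0.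
by rewrite invf_div (placeM wP (wp d) (placeVf wP (wp n) nt)) dt mul0r.
Qed.

End FixedPlace.

Lemma fixed_place_fin w t : is_Rplace w -> fixes_consts w -> w (yvar K) = Some t ->
  w =1 pull_place (Some t).
Proof.
move=> wP wC wY x; have [n [d [d0 ->]]] := fracP x.
pose g := gcdp n d.
have g0 : g != 0 by rewrite gcdp_eq0 negb_and d0 orbT.
have En : n = (n %/ g) * g by rewrite divpK // dvdp_gcdl.
have Ed : d = (d %/ g) * g by rewrite divpK // dvdp_gcdr.
have d'0 : d %/ g != 0 by apply: contraNneq d0 => dg0; rewrite Ed dg0 mul0r.
have nd : coprimep (n %/ g) (d %/ g) by apply: coprimep_div_gcd; rewrite d0 orbT.
have -> : n%:F / d%:F = (n %/ g)%:F / (d %/ g)%:F.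
  by rewrite {1}En {1}Ed !tofracM invfM mulrACA mulfV ?tofrac_eq0 ?mulr1.
rewrite (fixed_place_coprime wP wC wY nd d'0).
by rewrite (fixed_place_coprime (pull_place_is_place _) (pull_placeC (Some t))
  (pull_placeY _) nd d'0).
Qed.

(* At [y = oo] apply the finite case to [w \o yinv], which sends [y] to [0]. *)
Lemma fixed_placeE w : is_Rplace w -> fixes_consts w -> w =1 pull_place (w (yvar K)).
Proof.
move=> wP wC; case wY: (w (yvar K)) => [t|]; first exact: fixed_place_fin.
have w'P := place_comp yinv wP.
have w'C : fixes_consts (w \o yinv) by move=> c /=; rewrite yinvC.
have w'Y : (w \o yinv) (yvar K) = Some 0 by rewrite /= yinvY (placeV_inf wP wY).
move=> x; rewrite -(yinvK x); have /= -> := fixed_place_fin w'P w'C w'Y (yinv x).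
by rewrite /pull_place /= yinvK frac_rmap_yinv.
Qed.

End PullPlace.

Lemma rat_between (x y : RR) : x < y -> exists q : rat, x < ratr q < y.
Proof. by move=> /reals.rat_in_itvoo [q]; rewrite in_itv; exists q. Qed.

(* Two algebraic hypotheses on [phi : K -> RR] which force every R-place of a
   field containing [K] to restrict to [phi] on [K]. *)
Definition squares_below_nat (K : fieldType) :=
  forall c : K, exists (d : K) (n : nat), c * c + d * d = n%:R.

Definition nonneg_squares (K : fieldType) (phi : {rmorphism K -> RR}) :=
  forall c : K, 0 <= phi c -> exists d : K, c = d * d.

Section ConstPlace.
Variables (K : fieldType) (phi : {rmorphism K -> RR}) (u : K -> option RR).
Hypotheses (uP : is_Rplace u) (Kbnd : squares_below_nat K)
  (Ksq : nonneg_squares phi).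

(* If [u c] were infinite, [u] would send [n / c^2 = 1 + (d/c)^2] to [0],
   which is impossible for a sum [1 + e^2]. *)
Lemma place_const_fin c : exists r, u c = Some r.
Proof.
case uc: (u c) => [r|]; [by exists r | exfalso].
have ucc : u (c * c)^-1 = Some 0.
  by rewrite invfM (placeM uP (placeV_inf uP uc) (placeV_inf uP uc)) mulr0.
have [d [n Hn]] := Kbnd c; pose e := d / c.
have : u (1 + e * e) = Some 0.
  have c0 := place_inf_neq0 uP uc.
  rewrite -[1](mulfV (mulf_neq0 c0 c0)) /e mulf_div -mulrDl Hn.
  by rewrite (placeM uP (place_nat uP n) ucc) mulr0.
case ue: (u e) => [s|].
  rewrite (placeD uP (place1 uP) (placeM uP ue ue)) => -[] /eqP.
  by rewrite gt_eqF // ltr_pwDl // sqr_ge0.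
have uee : u (e * e) = None.
  apply/(placeV uP); first by rewrite mulf_neq0 ?(place_inf_neq0 uP ue).
  by rewrite invfM (placeM uP (placeV_inf uP ue) (placeV_inf uP ue)) mulr0.
by rewrite addrC (place_infD uP uee (place1 uP)).
Qed.

Lemma place_const_ge0 c r : 0 <= phi c -> u c = Some r -> 0 <= r.
Proof.
move=> /Ksq [d ->]; have [s us] := place_const_fin d.
by rewrite (placeM uP us us) => -[<-]; rewrite sqr_ge0.
Qed.

(* [u] preserves the order against rationals, which are dense in [RR]. *)
Lemma place_const c : u c = Some (phi c).
Proof.
have [r ur] := place_const_fin c; rewrite ur; congr Some.
have [ltrc|ltcr|//] := ltgtP r (phi c).
  have [q /andP[rq qc]] := rat_between ltrc.
  have /place_const_ge0 : 0 <= phi (c - ratr q).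
    by rewrite rmorphB fmorph_rat subr_ge0 ltW.
  by move/(_ _ (placeB uP ur (place_rat uP q))); rewrite subr_ge0 leNgt rq.
have [q /andP[cq qr]] := rat_between ltcr.
have /place_const_ge0 : 0 <= phi (ratr q - c).
  by rewrite rmorphB fmorph_rat subr_ge0 ltW.
by move/(_ _ (placeB uP (place_rat uP q) ur)); rewrite subr_ge0 leNgt qr.
Qed.
End ConstPlace.

Lemma fixes_consts_place (K : fieldType) (phi : {rmorphism K -> RR})
  (w : {fraction {poly K}} -> option RR) :
  is_Rplace w -> squares_below_nat K -> nonneg_squares phi -> fixes_consts phi w.
Proof. by move=> wP Kbnd Ksq c; apply: (place_const (place_comp (constF K) wP)). Qed.

Lemma nonneg_squares_rcf (R : rcfType) (phi : {rmorphism R -> RR}) : nonneg_squares phi.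
Proof.
move=> c phic; have [c0|c0] := leP 0 c.
  by exists (Num.sqrt c); rewrite -expr2 sqr_sqrtr.
have Nc : - c = Num.sqrt (- c) * Num.sqrt (- c).
  by rewrite -expr2 sqr_sqrtr // oppr_ge0 ltW.
have : 0 <= phi (- c) by rewrite Nc rmorphM -expr2 sqr_ge0.
rewrite rmorphN oppr_ge0 => phic'.
suff : phi c == 0 by rewrite fmorph_eq0 lt_eqF.
by rewrite eq_le phic phic'.
Qed.

Lemma squares_below_nat_archi (R : archiRcfType) : squares_below_nat R.
Proof.
move=> c; have /archi_boundP := sqr_ge0 c; set n := Num.bound _ => ltcn.
exists (Num.sqrt (n%:R - c ^+ 2)), n.
by rewrite -!expr2 sqr_sqrtr ?subr_ge0 ?ltW // addrC subrK.
Qed.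

Section RealClosedSub.
Variables (F : fieldType) (iF : {rmorphism F -> RR}).
Hypothesis rc : real_closed_sub iF.

(* A root of [X^2 - c] in [[0, c + 1]] by the intermediate value property. *)
Lemma nonneg_squares_real_closed_sub : nonneg_squares iF.
Proof.
move=> c c0.
have := rc (p := 'X * 'X - c%:P) (a := 0) (b := c + 1).
rewrite rmorph0 rmorphD rmorph1 rmorphB rmorphM /= map_polyX map_polyC /= !hornerE.
have h2 : 0 <= (iF c + 1) * (iF c + 1) - iF c by nra.
case/(_ (addr_ge0 c0 ler01) _ h2); first by rewrite oppr_le0.
by move=> x _; rewrite /root !hornerE subr_eq0 => /eqP <-; exists x.
Qed.

Lemma squares_below_nat_real_closed_sub : squares_below_nat F.
Proof.
move=> c; have /archi_boundP : 0 <= iF (c * c) by rewrite rmorphM -expr2 sqr_ge0.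
set n := Num.bound _ => ltcn.
have : 0 <= iF (n%:R - c * c) by rewrite rmorphB rmorph_nat subr_ge0 ltW.
by move=> /nonneg_squares_real_closed_sub [d dd]; exists d, n; rewrite -dd addrC subrK.
Qed.

End RealClosedSub.

Lemma eval_place_pos_nbhd t x : place_pos (eval_place t) x ->
  exists2 del : RR, 0 < del & forall t', `|t' - t| < del -> place_pos (eval_place t') x.
Proof.
case=> r [/eval_placeP [n [d [dt -> ->]]] r0].
(* [n / d] has the sign of the polynomial [n * d], which is continuous. *)
pose p := n * d.
have pt : 0 < p.[t].
  have -> : p.[t] = n.[t] / d.[t] * d.[t] ^+ 2 by rewrite hornerM mulrA divfK.
  by rewrite mulr_gt0 // exprn_even_gt0.
have [del del0 pcont] := poly_cont t p pt; exists del => // t' /pcont.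
rewrite ltr_norml => /andP[pt' _].
have {pt'} pt' : 0 < p.[t'] by move: pt' pt; set u := p.[t']; set v := p.[t]; lra.
have dt' : d.[t'] != 0 by apply: contraTneq pt' => dt'; rewrite hornerM dt' mulr0 ltxx.
exists (n.[t'] / d.[t']); rewrite eval_place_div //; split => //.
have -> : n.[t'] / d.[t'] = p.[t'] / d.[t'] ^+ 2.
  by rewrite hornerM expr2 invfM mulrA mulfK.
by rewrite divr_gt0 // exprn_even_gt0.
Qed.

Lemma eval_place_yinv t x : t != 0 -> eval_place t x = eval_place t^-1 (yinv x).
Proof.
move=> t0; have wP := place_comp yinv (eval_place_is_place t^-1).
have wC : fixes_consts idfun (eval_place t^-1 \o yinv).
  by move=> c /=; rewrite yinvC eval_place_tofrac hornerC.
have wY : eval_place t^-1 (yinv (yvar RR)) = Some t.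
  have eY : eval_place t^-1 (yvar RR) = Some t^-1 by rewrite eval_place_tofrac hornerX.
  by rewrite yinvY (placeVf (eval_place_is_place _) eY) ?invrK ?invr_eq0.
have /= -> := fixed_placeE wP wC x.
by rewrite wY /pull_place /= frac_rmap_id.
Qed.

Lemma eval_place_pos_far x : place_pos (point_place None) x ->
  exists2 M : RR, 0 < M & forall t', M < `|t'| -> place_pos (eval_place t') x.
Proof.
move=> /eval_place_pos_nbhd [del del0 xnbhd]; exists del^-1; first by rewrite invr_gt0.
move=> t' lt_t'; have t'0 : t' != 0.
  by apply: contraTneq lt_t' => ->; rewrite normr0 -leNgt ltW // invr_gt0.
rewrite /place_pos (eval_place_yinv x t'0); apply: xnbhd.
by rewrite subr0 normfV -(invrK del) ltf_pV2 ?posrE ?invr_gt0 ?normr_gt0.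
Qed.

Definition Hbasic (K : fieldType) (cs : seq K) (z : Mpl K) :=
  forall c, c \in cs -> Hsub c z.

Lemma Mcontinuous_subbasis (K L : fieldType) (f : Mpl K -> Mpl L) :
  (forall b z, Hsub b (f z) ->
     exists cs, Hbasic cs z /\ forall w, Hbasic cs w -> Hsub b (f w)) ->
  Mcontinuous f.
Proof.
move=> fsub V Vopen z /Vopen [bs [zbs bsV]].
suff [cs [zcs csbs]] : exists cs, Hbasic cs z /\ forall w, Hbasic cs w -> Hbasic bs (f w).
  by exists cs; split => // w /csbs /bsV.
elim: bs zbs {bsV} => [|b bs IH] zbs; first by exists [::].
have [|cs [zcs csbs]] := IH; first by move=> b' bb'; apply: zbs; rewrite inE bb' orbT.
have [cb [zcb cbb]] := fsub b z (zbs b (mem_head b bs)).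
exists (cb ++ cs); split => [c|w wcs b'].
  by rewrite mem_cat => /orP[]; [apply: zcb | apply: zcs].
rewrite inE => /orP[/eqP -> | bb'].
  by apply: cbb => c cc; apply: wcs; rewrite mem_cat cc.
by apply: csbs bb' => c cc; apply: wcs; rewrite mem_cat cc orbT.
Qed.

Lemma Hbasic_pair (K : fieldType) (c1 c2 : K) (z : Mpl K) :
  Hsub c1 z /\ Hsub c2 z <-> Hbasic [:: c1; c2] z.
Proof.
split=> [[z1 z2] c | zc]; first by rewrite !inE => /orP[] /eqP ->.
by split; apply: zc; rewrite !inE eqxx ?orbT.
Qed.

Section YvarNbhd.
Variable A : fieldType.
Local Notation AY := {fraction {poly A}}.

Lemma yvar_nbhd_fin (z : Mpl AY) t del : plv z (yvar A) = Some t -> 0 < del ->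
  exists cs, Hbasic cs z /\ forall w, Hbasic cs w ->
    exists2 t', plv w (yvar A) = Some t' & `|t' - t| < del.
Proof.
move=> zY del0.
have [a /andP[lt_a a_t]] : exists a : rat, t - del < ratr a < t.
  by apply: rat_between; lra.
have [b /andP[tb lt_b]] : exists b : rat, t < ratr b < t + del.
  by apply: rat_between; lra.
have itvP (w : Mpl AY) :=
  place_pos_itv (proj2_sig w) (yvar A) (place_rat (proj2_sig w) a)
    (place_rat (proj2_sig w) b).
exists [:: yvar A - ratr a; ratr b - yvar A]; split.
  by apply/Hbasic_pair/(itvP z); exists t; split; [exact: zY | exact/andP].
move=> w /Hbasic_pair/(itvP w) [t' [wY /andP[at' t'b]]].
by exists t' => //; rewrite ltr_norml; apply/andP; split; lra.
Qed.

Lemma yvar_nbhd_inf (z : Mpl AY) M : plv z (yvar A) = None -> 0 < M ->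
  exists cs, Hbasic cs z /\ forall w, Hbasic cs w ->
    plv w (yvar A) = None \/ exists2 t', plv w (yvar A) = Some t' & M < `|t'|.
Proof.
move=> zY M0.
have /rat_between [m /andP[m0 lt_m]] : 0 < M^-1 by rewrite invr_gt0.
have farP (w : Mpl AY) :=
  place_pos_far (proj2_sig w) (@yvar_neq0 A) (place_rat (proj2_sig w) m) m0.
exists [:: (yvar A)^-1 - - ratr m; ratr m - (yvar A)^-1]; split.
  by apply/Hbasic_pair/(farP z); left.
move=> w /Hbasic_pair/(farP w) [|[t' [wY lt_t']]]; [by left | right; exists t' => //].
by apply: lt_trans lt_t'; rewrite -(invrK M) ltf_pV2 ?posrE ?invr_gt0.
Qed.

End YvarNbhd.

Section PullContinuous.
Variables (A B : fieldType) (phiB : {rmorphism B -> RR}).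
Local Notation AY := {fraction {poly A}}.
Local Notation BY := {fraction {poly B}}.

Lemma pull_place_pos_nbhd (z : Mpl AY) (b : BY) :
  place_pos (pull_place phiB (plv z (yvar A))) b ->
  exists cs, Hbasic cs z /\
    forall w, Hbasic cs w -> place_pos (pull_place phiB (plv w (yvar A))) b.
Proof.
case zY: (plv z (yvar A)) => [t|] zb.
  have [del del0 bnbhd] := eval_place_pos_nbhd zb.
  have [cs [zcs csY]] := yvar_nbhd_fin zY del0.
  by exists cs; split => // w /csY [t' -> /bnbhd].
have [M M0 bfar] := eval_place_pos_far zb.
have [cs [zcs csY]] := yvar_nbhd_inf zY M0.
by exists cs; split => // w /csY [-> | [t' -> /bfar]].
Qed.

Lemma pull_continuous (f : Mpl AY -> Mpl BY) :
  (forall z, plv (f z) =1 pull_place phiB (plv z (yvar A))) -> Mcontinuous f.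
Proof.
move=> fE; apply: Mcontinuous_subbasis => b z.
rewrite /Hsub fE => /pull_place_pos_nbhd [cs [zcs csb]].
by exists cs; split => // w /csb; rewrite /place_pos -fE.
Qed.

End PullContinuous.

Section PullMpl.
Variables (K : fieldType) (phi : {rmorphism K -> RR}).
Local Notation KY := {fraction {poly K}}.

Definition pull_Mpl (t : option RR) : Mpl KY :=
  exist _ (pull_place phi t) (pull_place_is_place phi t).

Lemma pull_MplY t : plv (pull_Mpl t) (yvar K) = t.
Proof. exact: pull_placeY. Qed.

Lemma pull_Mpl_fixed (w : Mpl KY) :
  fixes_consts phi (plv w) -> w = pull_Mpl (plv w (yvar K)).
Proof. by move=> wC; apply: Mpl_ext; apply: fixed_placeE (proj2_sig w) wC. Qed.

Lemma Mpl_pullE (w : Mpl KY) : squares_below_nat K -> nonneg_squares phi ->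
  w = pull_Mpl (plv w (yvar K)).
Proof. by move=> Kbnd Ksq; apply/pull_Mpl_fixed/(fixes_consts_place (proj2_sig w)). Qed.

End PullMpl.

Lemma pull_place_frac_map (K L : fieldType) (phi : {rmorphism K -> L})
  (psi : {rmorphism L -> RR}) t x :
  pull_place psi t (frac_map phi x) = pull_place (psi \o phi) t x.
Proof. by rewrite /pull_place /= frac_mapE frac_rmap_comp. Qed.

Theorem lemma6p1 (R : archiRcfType) (F : fieldType)
  (iR : {rmorphism R -> F}) (iF : {rmorphism F -> RR}) :
  exists iota : Mpl {fraction {poly R}} -> Mpl {fraction {poly F}},
        (forall z, (forall c : F, plv (iota z) ((c%:P)%:F) = Some (iF c))
                   /\ plv (iota z) (yvar F) = plv z (yvar R)) /\
        (forall z (w : Mpl {fraction {poly F}}),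
            (forall c : F, plv w ((c%:P)%:F) = Some (iF c)) ->
            plv w (yvar F) = plv z (yvar R) -> w = iota z) /\
        Mcontinuous iota /\
        injective iota /\
        (forall z x, plv (iota z) (frac_map iR x) = plv z x) /\
        (real_closed_sub iF ->
           exists2 g : Mpl {fraction {poly F}} -> Mpl {fraction {poly R}},
             cancel iota g /\ cancel g iota & Mcontinuous g).
Proof.
pose phR : {rmorphism R -> RR} := iF \o iR.
have zR (z : Mpl {fraction {poly R}}) : z = pull_Mpl phR (plv z (yvar R)).
  by apply: Mpl_pullE; [exact: squares_below_nat_archi | exact: nonneg_squares_rcf].
exists (fun z => pull_Mpl iF (plv z (yvar R))).
split; first by move=> z; split => [c|]; [exact: pull_placeC | exact: pull_MplY].
split; first by move=> z w wC wY; rewrite (pull_Mpl_fixed wC) wY.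
split; first exact: pull_continuous.
split.
  move=> z1 z2 /(congr1 (fun w => plv w (yvar F))); rewrite !pull_MplY => eY.
  by rewrite (zR z1) eY -zR.
split; first by move=> z x; rewrite /= pull_place_frac_map {2}(zR z).
move=> rc; exists (fun w => pull_Mpl phR (plv w (yvar F))); last exact: pull_continuous.
split => [z | w]; first by rewrite pull_MplY -zR.
rewrite pull_MplY; apply/esym/Mpl_pullE.
  exact: squares_below_nat_real_closed_sub rc.
exact: nonneg_squares_real_closed_sub rc.
Qed.
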